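(* Let $\mathcal{A}\subseteq\mathbb{R}^3$ be measurable with finite positive measure, $k_0>0$, $\eta>0$, $\sigma^2>0$, and for $k\in\{1,2\}$ let $\mathsf{G}_k\in L^2(\mathcal{A})$ with $\mathsf{g}_k=\int_{\mathcal{A}}|\mathsf{G}_k(\mathbf{r})|^2\mathrm{d}\mathbf{r}>0$, $\mathsf{H}_k(\mathbf{r})=\frac{\mathrm{j}k_0\eta}{\sqrt{4\pi}}\mathsf{G}_k(\mathbf{r})$, $A_{\mathsf{u},k}>0$, $\mathsf{J}_{\mathsf{ul},k}\in\mathbb{C}$, and $\overline{\gamma}_{\mathsf{ul},k}=\frac{A_{\mathsf{u},k}^2|\mathsf{J}_{\mathsf{ul},k}|^2k_0^2\eta^2}{4\pi\sigma^2}$. Let $\rho=\frac{\int_{\mathcal{A}}\mathsf{G}_1^*(\mathbf{r})\mathsf{G}_2(\mathbf{r})\mathrm{d}\mathbf{r}}{\sqrt{\mathsf{g}_1\mathsf{g}_2}}$. Let $\mu_1=-\frac{1}{\mathsf{g}_1}\pm\frac{1}{\mathsf{g}_1\sqrt{1+\overline{\gamma}_{\mathsf{ul},1}\mathsf{g}_1}}$ and $\mathsf{W}_{\mathsf{Z}}(\mathbf{r}',\mathbf{r})=\delta(\mathbf{r}'-\mathbf{r})+\mu_1\mathsf{G}_1(\mathbf{r}')\mathsf{G}_1^*(\mathbf{r})$ (the whitening transformation of the interference-plus-noise field $\mathsf{Z}(\mathbf{r})=\mathsf{H}_1(\mathbf{r})\mathsf{J}_{\mathsf{ul},1}A_{\mathsf{u},1}s_{\mathsf{ul},1}+\mathsf{N}_{\mathsf{ul}}(\mathbf{r})$),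 and let $\overline{\mathsf{H}}_2(\mathbf{r}')=\int_{\mathcal{A}}\mathsf{W}_{\mathsf{Z}}(\mathbf{r}',\mathbf{r})\mathsf{H}_2(\mathbf{r})\mathrm{d}\mathbf{r}$. Then the SNR for decoding user 2's symbol obtained by first whitening with $\mathsf{W}_{\mathsf{Z}}$ and then applying the MRC detector matched to $\overline{\mathsf{H}}_2$, namely $$\gamma_{\mathsf{ul},2}=\frac{A_{\mathsf{u},2}^2|\mathsf{J}_{\mathsf{ul},2}|^2}{\sigma^2}\int_{\mathcal{A}}|\overline{\mathsf{H}}_2(\mathbf{r}')|^2\mathrm{d}\mathbf{r}',$$ equals $$\gamma_{\mathsf{ul},2}=\overline{\gamma}_{\mathsf{ul},2}\mathsf{g}_2\left(1-\frac{\overline{\gamma}_{\mathsf{ul},1}\mathsf{g}_1|\rho|^2}{1+\overline{\gamma}_{\mathsf{ul},1}\mathsf{g}_1}\right).$$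
   Context: $\delta$ is the Dirac delta, so $\overline{\mathsf{H}}_2(\mathbf{r}')=\mathsf{H}_2(\mathbf{r}')+\mu_1\mathsf{G}_1(\mathbf{r}')\int_{\mathcal{A}}\mathsf{G}_1^*(\mathbf{r})\mathsf{H}_2(\mathbf{r})\mathrm{d}\mathbf{r}$. In the paper, $\mathcal{A}$ is the base-station continuous aperture and $\mathsf{G}_k(\mathbf{r})=\frac{e^{-\mathrm{j}k_0\|\mathbf{r}-\mathbf{s}_k\|}}{\sqrt{4\pi}\|\mathbf{r}-\mathbf{s}_k\|}\sqrt{\frac{|\mathbf{e}^{\mathsf{T}}(\mathbf{s}_k-\mathbf{r})|}{\|\mathbf{r}-\mathbf{s}_k\|}}$ for user locations $\mathbf{s}_k\notin\overline{\mathcal{A}}$ and unit normal $\mathbf{e}$ of the aperture; $\mathsf{N}_{\mathsf{ul}}$ is white Gaussian noise of intensity $\sigma^2$, $s_{\mathsf{ul},k}$ unit-power symbols. *)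

From HB Require Import structures.
From mathcomp Require Import all_boot all_order all_algebra.
From mathcomp Require Import all_classical all_reals all_analysis.
From mathcomp Require Import complex.
Set Implicit Arguments. Unset Strict Implicit. Unset Printing Implicit Defensive.
Import Order.TTheory GRing.Theory Num.Theory.
Local Open Scope ring_scope.
Local Open Scope classical_set_scope.

Definition R3 (R : realType) := ((R * R) * R)%type.
Definition leb3 (R : realType) :=
  ((@lebesgue_measure R \x @lebesgue_measure R) \x @lebesgue_measure R)%E.
Arguments leb3 R : clear implicits.

Definition sqmod (R : realType) (z : R[i]) : R := complex.Re z ^+ 2 + complex.Im z ^+ 2.

Definition cconj (R : realType) (z : R[i]) : R[i] := Complex (complex.Re z) (- complex.Im z).

Definition jC (R : realType) : R[i] := Complex 0 1.

Definition rC (R : realType) (x : R) : R[i] := Complex x 0.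

Definition cint (R : realType) (A : set (R3 R)) (f : R3 R -> R[i]) : R[i] :=
  Complex (Rintegral (leb3 R) A (fun r => complex.Re (f r)))
          (Rintegral (leb3 R) A (fun r => complex.Im (f r))).

Definition cL2 (R : realType) (A : set (R3 R)) (f : R3 R -> R[i]) : Prop :=
  measurable_fun A (fun r => complex.Re (f r)) /\ measurable_fun A (fun r => complex.Im (f r)) /\
  (\int[leb3 R]_(r in A) (sqmod (f r))%:E < +oo)%E.

From HB Require Import structures.
From mathcomp Require Import all_boot all_order all_algebra.
From mathcomp Require Import all_classical all_reals all_analysis.
From mathcomp Require Import measurable_realfun complex.
From mathcomp Require Import ring lra.
Set Implicit Arguments. Unset Strict Implicit. Unset Printing Implicit Defensive.
Import Order.TTheory GRing.Theory Num.Theory.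
Local Open Scope ring_scope.
Local Open Scope classical_set_scope.

(* The whitened channel H2bar = H2 + mu1 <G1, H2> G1 is a rank-one update of
   H2, and the cross term of |H2bar|^2 integrates to 2 mu1 |<G1, H2>|^2, so
     ||H2bar||^2 = ||H2||^2 + (mu1^2 g1 + 2 mu1) |<G1, H2>|^2.
   For either sign in mu1, mu1^2 g1 + 2 mu1 = - gbar1 / (1 + gbar1 g1).  As H2 is
   G2 times a constant c with |c|^2 = k0^2 eta^2 / (4 pi), ||H2||^2 = |c|^2 g2
   and |<G1, H2>|^2 = |c|^2 g1 g2 |rho|^2, which gives the formula. *)

Section sqmod.
Variable R : realType.
Implicit Types z w : R[i].

Lemma sqmod_ge0 z : 0 <= sqmod z.
Proof. by rewrite addr_ge0 ?sqr_ge0. Qed.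

Lemma complexReM z w :
  complex.Re (z * w) = complex.Re z * complex.Re w - complex.Im z * complex.Im w.
Proof. by case: z w => [a b] [c e]. Qed.

Lemma complexImM z w :
  complex.Im (z * w) = complex.Re z * complex.Im w + complex.Im z * complex.Re w.
Proof. by case: z w => [a b] [c e]. Qed.

Lemma Re_cconjM z w :
  complex.Re (cconj z * w) = complex.Re z * complex.Re w + complex.Im z * complex.Im w.
Proof. by case: z w => [a b] [c e]; rewrite /= mulNr opprK. Qed.

Lemma Im_cconjM z w :
  complex.Im (cconj z * w) = complex.Re z * complex.Im w - complex.Im z * complex.Re w.
Proof. by case: z w => [a b] [c e]; rewrite /= mulNr. Qed.

Lemma sqmodM z w : sqmod (z * w) = sqmod z * sqmod w.
Proof. by case: z w => [a b] [c e]; rewrite /sqmod /=; ring. Qed.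

Lemma sqmod_rC (x : R) : sqmod (rC x) = x ^+ 2.
Proof. by rewrite /sqmod /= expr0n addr0. Qed.

Lemma sqmodDM z w u : sqmod (z + w * u) = sqmod z + sqmod w * sqmod u
  + 2 * (complex.Re w * complex.Re (cconj u * z) + complex.Im w * complex.Im (cconj u * z)).
Proof. by case: z w u => [a b] [c e] [f g]; rewrite /sqmod /=; ring. Qed.

Lemma normr_Re_cconjM_le z w : `|complex.Re (cconj z * w)| <= sqmod z + sqmod w.
Proof.
case: z w => [a b] [c e]; rewrite /sqmod /= ler_norml.
have := sqr_ge0 (a + c); have := sqr_ge0 (a - c).
have := sqr_ge0 (b + e); have := sqr_ge0 (b - e).
move=> *; apply/andP; split; nra.
Qed.

Lemma normr_Im_cconjM_le z w : `|complex.Im (cconj z * w)| <= sqmod z + sqmod w.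
Proof.
case: z w => [a b] [c e]; rewrite /sqmod /= ler_norml.
have := sqr_ge0 (a + e); have := sqr_ge0 (a - e).
have := sqr_ge0 (b + c); have := sqr_ge0 (b - c).
move=> *; apply/andP; split; nra.
Qed.

End sqmod.

Section complex_integral.
Context d (T : measurableType d) (R : realType).
Variables (mu : {measure set T -> \bar R}) (D : set T).
Hypothesis mD : measurable D.
Implicit Types (f g h : T -> R[i]) (w : R[i]).

(* [cint A] and [cL2 A] are [cintegral (leb3 R) A] and [square_integrable (leb3 R) A]. *)
Definition cintegral h : R[i] :=
  Complex (Rintegral mu D (fun x => complex.Re (h x)))
          (Rintegral mu D (fun x => complex.Im (h x))).

Definition square_integrable f : Prop :=
  measurable_fun D (fun x => complex.Re (f x)) /\
  measurable_fun D (fun x => complex.Im (f x)) /\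
  (\int[mu]_(x in D) (sqmod (f x))%:E < +oo)%E.

Local Notation integrable u := (mu.-integrable D (EFin \o u)).

Lemma integrable_EFinD (u v : T -> R) :
  integrable u -> integrable v -> integrable (fun x => u x + v x).
Proof. by move=> iu iv; apply: eq_integrable (integrableD mD iu iv). Qed.

Lemma integrable_EFinZl (k : R) (u : T -> R) :
  integrable u -> integrable (fun x => k * u x).
Proof.
move=> iu; apply: (eq_integrable mD (fun x => k%:E * (EFin \o u) x)%E).
  by move=> x _; rewrite /= EFinM.
exact: integrableZl.
Qed.

Lemma measurable_sqmod f : square_integrable f ->
  measurable_fun D (fun x => sqmod (f x)).
Proof.
case=> mRe [mIm _].
by apply: measurable_funD; apply: measurable_funX.
Qed.

Lemma integrable_sqmod f : square_integrable f -> integrable (fun x => sqmod (f x)).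
Proof.
move=> f2; have mf := measurable_sqmod f2; case: f2 => _ [_ fint].
apply/integrableP; split; first exact/measurable_EFinP.
by under eq_integral => x _ do rewrite /= ger0_norm ?sqmod_ge0 //.
Qed.

Lemma square_integrableZl w f : square_integrable f ->
  square_integrable (fun x => w * f x).
Proof.
move=> f2; have mf := measurable_sqmod f2; case: f2 => mRe [mIm fint].
split; [|split].
- under eq_fun do rewrite complexReM.
  by apply: measurable_funB; apply: measurable_funM.
- under eq_fun do rewrite complexImM.
  by apply: measurable_funD; apply: measurable_funM.
under eq_integral => x _ do rewrite sqmodM EFinM.
rewrite ge0_integralZl //.
- by rewrite lte_mul_pinfty // lee_fin sqmod_ge0.
- exact: measurableT_comp.
- by move=> x _; rewrite lee_fin sqmod_ge0.
- by rewrite lee_fin sqmod_ge0.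
Qed.

Lemma Rintegral_sqmodZl w f : square_integrable f ->
  Rintegral mu D (fun x => sqmod (w * f x)) =
  sqmod w * Rintegral mu D (fun x => sqmod (f x)).
Proof.
move=> f2; under eq_Rintegral => x _ do rewrite sqmodM.
by rewrite RintegralZl //; exact: integrable_sqmod.
Qed.

Lemma integrable_cconjM f g : square_integrable f -> square_integrable g ->
  integrable (fun x => complex.Re (cconj (f x) * g x)) /\
  integrable (fun x => complex.Im (cconj (f x) * g x)).
Proof.
move=> f2 g2; have ifg := integrable_EFinD (integrable_sqmod f2) (integrable_sqmod g2).
case: f2 => mRef [mImf _]; case: g2 => mReg [mImg _].
split; apply: (le_integrable mD _ _ ifg) => [|x _ /=].
- apply: measurableT_comp => //; under eq_fun do rewrite Re_cconjM.
  by apply: measurable_funD; apply: measurable_funM.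
- rewrite lee_fin (ger0_norm (addr_ge0 (sqmod_ge0 _) (sqmod_ge0 _))).
  exact: normr_Re_cconjM_le.
- apply: measurableT_comp => //; under eq_fun do rewrite Im_cconjM.
  by apply: measurable_funB; apply: measurable_funM.
- rewrite lee_fin (ger0_norm (addr_ge0 (sqmod_ge0 _) (sqmod_ge0 _))).
  exact: normr_Im_cconjM_le.
Qed.

Local Notation inner f g := (cintegral (fun x => cconj (f x) * g x)).

Lemma cintegralZl w h :
  integrable (fun x => complex.Re (h x)) -> integrable (fun x => complex.Im (h x)) ->
  cintegral (fun x => w * h x) = w * cintegral h.
Proof.
move=> iRe iIm; rewrite /cintegral.
under eq_Rintegral do rewrite complexReM.
under [X in Complex _ X]eq_Rintegral do rewrite complexImM.
rewrite RintegralB ?RintegralD ?RintegralZl //; try exact: integrable_EFinZl.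
by case: w.
Qed.

Lemma cintegral_cconjMZr w f g : square_integrable f -> square_integrable g ->
  inner f (fun x => w * g x) = w * inner f g.
Proof.
move=> f2 g2; have [iRe iIm] := integrable_cconjM f2 g2.
rewrite -cintegralZl //; congr cintegral; apply: funext => x.
exact: mulrCA.
Qed.

Lemma Rintegral_sqmodDM w f g : square_integrable f -> square_integrable g ->
  Rintegral mu D (fun x => sqmod (g x + w * f x)) =
  Rintegral mu D (fun x => sqmod (g x)) + sqmod w * Rintegral mu D (fun x => sqmod (f x))
  + 2 * (complex.Re w * complex.Re (inner f g) + complex.Im w * complex.Im (inner f g)).
Proof.
move=> f2 g2; have [iRe iIm] := integrable_cconjM f2 g2.
have isf := integrable_sqmod f2; have isg := integrable_sqmod g2.
under eq_Rintegral do rewrite sqmodDM.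
have iRe' := integrable_EFinZl (complex.Re w) iRe.
have iIm' := integrable_EFinZl (complex.Im w) iIm.
have isf' := integrable_EFinZl (sqmod w) isf.
have icross := integrable_EFinD iRe' iIm'.
rewrite (RintegralD mD (integrable_EFinD isg isf') (integrable_EFinZl 2 icross)).
rewrite (RintegralD mD isg isf') (RintegralZl _ mD icross) (RintegralD mD iRe' iIm').
by rewrite !RintegralZl.
Qed.

Lemma Rintegral_sqmod_rank_one_update (m : R) f g :
  square_integrable f -> square_integrable g ->
  Rintegral mu D (fun x => sqmod (g x + rC m * f x * inner f g)) =
  Rintegral mu D (fun x => sqmod (g x))
  + (m ^+ 2 * Rintegral mu D (fun x => sqmod (f x)) + 2 * m) * sqmod (inner f g).
Proof.
move=> f2 g2; under eq_Rintegral do rewrite -mulrA (mulrC (f _)) mulrA.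
rewrite Rintegral_sqmodDM // sqmodM sqmod_rC.
by move: (inner f g) => [a b]; rewrite /sqmod /=; ring.
Qed.

End complex_integral.

Lemma whitening_gain (R : rcfType) (g gamma s m : R) :
  g != 0 -> 0 < 1 + gamma * g -> s ^+ 2 = 1 ->
  m = - g^-1 + s / (g * Num.sqrt (1 + gamma * g)) ->
  m ^+ 2 * g + 2 * m = - gamma / (1 + gamma * g).
Proof.
move=> g_neq0 q2_gt0 s2 ->.
have q2 : Num.sqrt (1 + gamma * g) ^+ 2 = 1 + gamma * g by rewrite sqr_sqrtr // ltW.
have q_neq0 : Num.sqrt (1 + gamma * g) != 0 by rewrite gt_eqF // sqrtr_gt0.
rewrite [LHS](_ : _ = (s ^+ 2 - Num.sqrt (1 + gamma * g) ^+ 2) /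
                     (g * Num.sqrt (1 + gamma * g) ^+ 2)).
  by rewrite s2 q2; field; rewrite g_neq0 gt_eqF.
by field; rewrite g_neq0 q_neq0.
Qed.

Theorem theorem1 (R : realType) (A : set (R3 R))
  (k0 eta sigma2 : R) (G1 G2 : R3 R -> R[i])
  (Au1 Au2 : R) (J1 J2 : R[i]) (pm : bool) :
  measurable A ->
  (0 < leb3 R A)%E -> (leb3 R A < +oo)%E ->
  0 < k0 -> 0 < eta -> 0 < sigma2 ->
  cL2 A G1 -> cL2 A G2 ->
  let g1 := Rintegral (leb3 R) A (fun r => sqmod (G1 r)) in
  let g2 := Rintegral (leb3 R) A (fun r => sqmod (G2 r)) in
  0 < g1 -> 0 < g2 ->
  0 < Au1 -> 0 < Au2 ->
  let H2 := fun r => jC R * rC (k0 * eta / Num.sqrt (4 * pi)) * G2 r in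
  let gbar1 := Au1 ^+ 2 * sqmod J1 * k0 ^+ 2 * eta ^+ 2 / (4 * pi * sigma2) in
  let gbar2 := Au2 ^+ 2 * sqmod J2 * k0 ^+ 2 * eta ^+ 2 / (4 * pi * sigma2) in
  let rho := rC (Num.sqrt (g1 * g2))^-1 * cint A (fun r => cconj (G1 r) * G2 r) in
  let mu1 := - g1^-1 + (if pm then 1 else -1) / (g1 * Num.sqrt (1 + gbar1 * g1)) in
  let H2bar := fun r' =>
    H2 r' + rC mu1 * G1 r' * cint A (fun r => cconj (G1 r) * H2 r) in
  let gamma2 := Au2 ^+ 2 * sqmod J2 / sigma2 *
                Rintegral (leb3 R) A (fun r' => sqmod (H2bar r')) in
  gamma2 = gbar2 * g2 * (1 - gbar1 * g1 * sqmod rho / (1 + gbar1 * g1)).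
Proof.
move=> mA _ _ k0_gt0 eta_gt0 sigma2_gt0 G1_L2 G2_L2 g1 g2 g1_gt0 g2_gt0 _ _
  H2 gbar1 gbar2 rho mu1 H2bar gamma2.
pose w := jC R * rC (k0 * eta / Num.sqrt (4 * pi)).
pose I := cintegral (leb3 R) A (fun r => cconj (G1 r) * G2 r).
have pi_pos := pi_gt0 R.
have sqmod_w : sqmod w = k0 ^+ 2 * eta ^+ 2 / (4 * pi).
  rewrite sqmodM sqmod_rC expr_div_n exprMn sqr_sqrtr ?mulr_ge0 ?ltW //.
  by rewrite /sqmod /= expr0n expr1n add0r mul1r.
have norm_H2 : Rintegral (leb3 R) A (fun r => sqmod (H2 r)) = sqmod w * g2.
  exact: Rintegral_sqmodZl.
have inner_G1_H2 : cintegral (leb3 R) A (fun r => cconj (G1 r) * H2 r) = w * I.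
  exact: cintegral_cconjMZr.
have sqmod_rho : sqmod rho = sqmod I / (g1 * g2).
  rewrite sqmodM sqmod_rC exprVn sqr_sqrtr ?mulr_ge0 ?ltW //.
  by rewrite mulrC.
have gbar1_ge0 : 0 <= gbar1.
  apply: divr_ge0; last by rewrite ltW // !mulr_gt0.
  exact: mulr_ge0 (mulr_ge0 (mulr_ge0 (sqr_ge0 _) (sqmod_ge0 _)) (sqr_ge0 _)) (sqr_ge0 _).
have gbar1_g1_gt0 : 0 < 1 + gbar1 * g1.
  by have := mulr_ge0 gbar1_ge0 (ltW g1_gt0); lra.
have sign2 : (if pm then 1 else -1) ^+ 2 = 1 :> R by case: (pm); rewrite ?sqrrN expr1n.
have gain := whitening_gain (m := mu1) (lt0r_neq0 g1_gt0) gbar1_g1_gt0 sign2 erefl.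
rewrite /gamma2 /H2bar Rintegral_sqmod_rank_one_update //; last exact: square_integrableZl.
rewrite -/g1 norm_H2 inner_G1_H2 sqmodM gain sqmod_rho sqmod_w /gbar2.
(* [field] would otherwise unfold [pi] into its defining choice term. *)
move: pi_pos; generalize (pi : R) => p p_gt0.
by field; rewrite !lt0r_neq0.
Qed.
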